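(* There exists a planar graph $G_2$ such that for every star forest $F$ in $G_2$ (a subgraph of $G_2$ each of whose components is a star), the graph $G_2-E(F)$ contains $K_4$ as a subgraph (and hence is not $3$-colourable). *)

From HB Require Import structures.
From mathcomp Require Import all_boot all_order all_algebra.
From mathcomp Require Import all_classical all_reals all_analysis.
From mathcomp Require Import Rstruct Rstruct_topology.
Set Implicit Arguments. Unset Strict Implicit. Unset Printing Implicit Defensive.
Import Order.TTheory GRing.Theory Num.Theory.
Local Open Scope ring_scope.
Local Open Scope classical_set_scope.

Definition simple_graph (T : finType) (e : rel T) : Prop :=
  symmetric e /\ irreflexive e.

Definition Rr := Rdefinitions.R.
Definition point := (Rr * Rr)%type.

Definition planar (T : finType) (e : rel T) : Prop :=
  exists (pos : T -> point) (arc : T -> T -> Rr -> point),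
    injective pos /\
    (forall x y, e x y ->
       [/\ {within `[0%R, 1%R], continuous (arc x y)},
           arc x y 0%R = pos x /\ arc x y 1%R = pos y,
           (forall s t : Rr, (0 <= s <= 1)%R -> (0 <= t <= 1)%R ->
              arc x y s = arc x y t -> s = t),
           (forall t : Rr, arc y x t = arc x y (1 - t)%R) &
           (forall (t : Rr) (z : T), (0 < t < 1)%R -> arc x y t <> pos z)]) /\
    (forall x y u v, e x y -> e u v ->
       ~ ((x == u) && (y == v) || (x == v) && (y == u)) ->
       forall s t : Rr, (0 < s < 1)%R -> (0 < t < 1)%R ->
         arc x y s <> arc u v t).

Definition edge_subgraph (T : finType) (e f : rel T) : Prop :=
  symmetric f /\ (forall x y, f x y -> e x y).

(* A star forest F in G: a subgraph each of whose components is a star, i.e.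
   every component has a centre vertex incident with all its edges.
   (Isolated vertices of F are trivial stars and do not affect E(F).) *)
Definition star_forest (T : finType) (e f : rel T) : Prop :=
  edge_subgraph e f /\
  forall x : T, exists c : T,
    forall u v : T, connect f x u -> f u v -> (u == c) || (v == c).

Definition delete_edges (T : finType) (e f : rel T) : rel T :=
  fun x y => e x y && ~~ f x y.

Definition contains_K4 (T : finType) (g : rel T) : Prop :=
  exists k : 'I_4 -> T, injective k /\ forall i j : 'I_4, i != j -> g (k i) (k j).

(** G2 is an explicit graph on 51 vertices.  It is planar because it has a
    straight-line drawing with integer coordinates: two segments have disjoint
    interiors as soon as one of them lies weakly on one side of the line
    through the other without lying on it, and these sign conditions on
    orientation determinants are checked by computation.

    Suppose F is a star forest of G2 such that G2 - E(F) contains no K4.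
    Take a boolean variable for each edge (is it in F?) and for each vertex
    (has it two distinct F-neighbours?).  Every K4 of G2 contains an edge of
    F; two F-edges uv and vw with u <> w make v branching; and no F-edge joins
    two branching vertices, since only the centre of a star can have degree
    at least 2.  A DPLL procedure, proved sound once and for all, refutes this
    propositional formula. *)

From Pilot Require Import Defs.
From mathcomp Require Import all_boot all_order all_algebra.
From mathcomp Require Import all_classical all_reals all_analysis.
From mathcomp Require Import Rstruct Rstruct_topology zify.
From Stdlib Require Import ZArith NArith Reals Lra.
Set Implicit Arguments. Unset Strict Implicit. Unset Printing Implicit Defensive.
Import numFieldNormedType.Exports.

(** * Graphs given by edge lists *)

Definition list_adj (L : seq (nat * nat)) (m k : nat) : bool :=
  ((m, k) \in L) || ((k, m) \in L).

Definition list_graph (n : nat) (L : seq (nat * nat)) : rel 'I_n :=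
  fun x y => list_adj L x y.
Arguments list_graph : clear implicits.

Definition edge_list_wf (n : nat) (L : seq (nat * nat)) : bool :=
  all (fun p => p.1 < p.2 < n) L.

Lemma list_adj_sym L : symmetric (list_adj L).
Proof. by move=> m k; rewrite /list_adj orbC. Qed.

Lemma list_graph_symmetric n L : symmetric (list_graph n L).
Proof. by move=> x y; apply: list_adj_sym. Qed.

Section EdgeLists.
Variables (n : nat) (L : seq (nat * nat)).
Hypothesis L_wf : edge_list_wf n L.

Lemma edge_list_wf_mem p : p \in L -> p.1 < p.2 < n.
Proof. exact: (allP L_wf). Qed.

Lemma list_adj_edge m k : list_adj L m k ->
  [/\ m < n, k < n, m != k & (minn m k, maxn m k) \in L].
Proof.
case/orP=> mem; have /andP[/= lt_mk lt_kn] := edge_list_wf_mem mem.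
  by rewrite (minn_idPl (ltnW lt_mk)) (maxn_idPr (ltnW lt_mk)) mem; split=> //; lia.
by rewrite (minn_idPr (ltnW lt_mk)) (maxn_idPl (ltnW lt_mk)) mem; split=> //; lia.
Qed.

Lemma list_graph_irreflexive : irreflexive (list_graph n L).
Proof. by move=> x; apply/negP=> /list_adj_edge[_ _ /eqP]. Qed.

End EdgeLists.

Lemma list_graph_inord n L m k : edge_list_wf n.+1 L -> list_adj L m k ->
  list_graph n.+1 L (inord m) (inord k).
Proof.
move=> L_wf /[dup] adj /(list_adj_edge L_wf)[m_lt k_lt _ _].
by rewrite /list_graph !inordK.
Qed.

(** * Straight-line drawings *)

Local Open Scope classical_set_scope.

Section AffineMaps.
Local Open Scope ring_scope.

Lemma affine_continuous (R : realType) (a b : R) : continuous (fun t : R => a + t * b).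
Proof.
move=> t; apply: cvgD; first exact: cvg_cst.
by apply: cvgM; [exact: cvg_id | exact: cvg_cst].
Qed.

End AffineMaps.

Section StraightLineDrawing.
Local Open Scope R_scope.

Definition seg (p q : Defs.point) (t : R) : Defs.point :=
  (p.1 + t * (q.1 - p.1), p.2 + t * (q.2 - p.2)).

Lemma seg_continuous p q : {within `[0%R, 1%R], continuous (seg p q)}.
Proof.
apply: continuous_subspaceT => t.
apply: (cvg_pair (FF := nbhs_filter t) (FG := nbhs_filter _) (FH := nbhs_filter _)).
all: exact: affine_continuous.
Qed.

Lemma seg0 p q : seg p q 0 = p.
Proof. by case: p => a b; rewrite /seg /=; f_equal; ring. Qed.

Lemma seg1 p q : seg p q 1 = q.
Proof. by case: p => a b; case: q => c d; rewrite /seg /=; f_equal; ring. Qed.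

Lemma seg_rev p q t : seg q p t = seg p q (1 - t).
Proof. by rewrite /seg /=; f_equal; ring. Qed.

Lemma seg_inj p q s t : p <> q -> seg p q s = seg p q t -> s = t.
Proof.
case: p q => [a b] [c d] /= pq [E1 E2].
have F1 : (s - t) * (c - a) = 0 by lra.
have F2 : (s - t) * (d - b) = 0 by lra.
case: (Rmult_integral _ _ F1) => [|ca]; first lra.
case: (Rmult_integral _ _ F2) => [|db]; first lra.
by case: pq; f_equal; lra.
Qed.

Definition orient (p q r : Defs.point) : R :=
  (q.1 - p.1) * (r.2 - p.2) - (q.2 - p.2) * (r.1 - p.1).

Lemma orientC p q r : orient q p r = - orient p q r.
Proof. rewrite /orient; ring. Qed.

Lemma orient_seg p q r s t :
  orient p q (seg r s t) = (1 - t) * orient p q r + t * orient p q s.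
Proof. rewrite /orient /seg /=; ring. Qed.

Lemma seg_off_line p q z t : orient p q z <> 0 -> seg p q t <> z.
Proof. by move=> pqz E; apply: pqz; rewrite -E /orient /seg /=; ring. Qed.

Definition open_seg_off_line (p q r s : Defs.point) : Prop :=
  let a := orient p q r in let b := orient p q s in
  (0 <= a /\ 0 <= b /\ 0 < a + b) \/ (a <= 0 /\ b <= 0 /\ a + b < 0).

Lemma open_seg_off_lineN p q r s :
  open_seg_off_line p q r s -> open_seg_off_line q p r s.
Proof. by rewrite /open_seg_off_line !(orientC p q); lra. Qed.

Lemma open_seg_off_lineC p q r s :
  open_seg_off_line p q r s -> open_seg_off_line p q s r.
Proof. by rewrite /open_seg_off_line; lra. Qed.

Lemma convex_comb_pos (a b t : R) : 0 <= a -> 0 <= b -> 0 < a + b -> 0 < t < 1 ->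
  0 < (1 - t) * a + t * b.
Proof.
move=> a0 b0 ab [t0 t1]; have tb : 0 <= t * b by apply: Rmult_le_pos; lra.
case: (Rle_lt_or_eq_dec 0 a a0) => [apos|a_eq0].
  have : 0 < (1 - t) * a by apply: Rmult_lt_0_compat; lra.
  lra.
subst a; have : 0 < t * b by apply: Rmult_lt_0_compat; lra.
lra.
Qed.

Lemma seg_neq_open_seg p q r s t t' : open_seg_off_line p q r s -> 0 < t' < 1 ->
  seg p q t <> seg r s t'.
Proof.
move=> off t'01 E.
have : orient p q (seg p q t) = 0 by rewrite /orient /seg /=; ring.
rewrite E orient_seg; case: off => [[a0 [b0 ab]] | [a0 [b0 ab]]].
  by have := convex_comb_pos a0 b0 ab t'01; lra.
have := @convex_comb_pos (- orient p q r) (- orient p q s) t'; lra.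
Qed.

Definition open_segs_apart (p q r s : Defs.point) : Prop :=
  open_seg_off_line p q r s \/ open_seg_off_line r s p q.

Lemma open_segs_apartC p q r s : open_segs_apart p q r s -> open_segs_apart r s p q.
Proof. by rewrite /open_segs_apart; tauto. Qed.

Lemma open_segs_apartN p q r s : open_segs_apart p q r s -> open_segs_apart q p r s.
Proof.
by case=> [/open_seg_off_lineN | /open_seg_off_lineC]; [left | right].
Qed.

Lemma open_segs_apartNr p q r s : open_segs_apart p q r s -> open_segs_apart p q s r.
Proof. by move=> /open_segs_apartC /open_segs_apartN /open_segs_apartC. Qed.

Lemma open_segs_apart_seg p q r s t t' : open_segs_apart p q r s ->
  0 < t < 1 -> 0 < t' < 1 -> seg p q t <> seg r s t'.
Proof.
case=> [off _ t'01 | off t01 _ E]; first exact: seg_neq_open_seg.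
exact: seg_neq_open_seg off t01 (esym E).
Qed.

Lemma open_unit_interval (t : R) : (0 < t < 1)%O -> 0 < t < 1.
Proof. by move=> /andP[/RltP t0 /RltP t1]. Qed.

Lemma straight_line_planar (T : finType) (e : rel T) (pos : T -> Defs.point) :
  irreflexive e -> injective pos ->
  (forall x y z, e x y -> z != x -> z != y -> orient (pos x) (pos y) (pos z) <> 0) ->
  (forall x y u v, e x y -> e u v -> ~ ((x == u) && (y == v) || (x == v) && (y == u)) ->
     open_segs_apart (pos x) (pos y) (pos u) (pos v)) ->
  planar e.
Proof.
move=> irr_e pos_inj off_line apart.
exists pos, (fun x y => seg (pos x) (pos y)); split=> //; split.
  move=> x y exy; have pxy : pos x <> pos y.
    by move/pos_inj=> xy; rewrite xy irr_e in exy.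
  split; [exact: seg_continuous | by rewrite seg0 seg1 | | exact: seg_rev |].
    by move=> s t _ _; apply: seg_inj.
  move=> t z /open_unit_interval t01.
  have [-> | zx] := eqVneq z x.
    by move=> E; have := seg_inj pxy (etrans E (esym (seg0 _ (pos y)))); lra.
  have [-> | zy] := eqVneq z y.
    by move=> E; have := seg_inj pxy (etrans E (esym (seg1 (pos x) _))); lra.
  exact/seg_off_line/off_line.
move=> x y u v exy euv neq s t /open_unit_interval s01 /open_unit_interval t01.
exact: open_segs_apart_seg (apart _ _ _ _ exy euv neq) s01 t01.
Qed.

End StraightLineDrawing.

Section IntegerDrawing.
Local Open Scope R_scope.

Definition ptZ (z : Z * Z) : Defs.point := (IZR z.1, IZR z.2).

Definition orientZ (p q r : Z * Z) : Z :=
  ((q.1 - p.1) * (r.2 - p.2) - (q.2 - p.2) * (r.1 - p.1))%Z.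

Lemma orient_ptZ p q r : orient (ptZ p) (ptZ q) (ptZ r) = IZR (orientZ p q r).
Proof. by rewrite /orient /orientZ /= minus_IZR !mult_IZR !minus_IZR. Qed.

Definition open_seg_off_lineZ (p q r s : Z * Z) : bool :=
  let a := orientZ p q r in let b := orientZ p q s in
  ((0 <=? a) && (0 <=? b) && (0 <? a + b))%Z ||
  ((a <=? 0) && (b <=? 0) && (a + b <? 0))%Z.

Definition open_segs_apartZ (p q r s : Z * Z) : bool :=
  open_seg_off_lineZ p q r s || open_seg_off_lineZ r s p q.

Lemma open_seg_off_lineZP p q r s :
  open_seg_off_lineZ p q r s -> open_seg_off_line (ptZ p) (ptZ q) (ptZ r) (ptZ s).
Proof.
rewrite /open_seg_off_line !orient_ptZ -plus_IZR.
case/orP=> /andP[/andP[/Z.leb_le a /Z.leb_le b] /Z.ltb_lt ab]; [left | right].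
  by split; [|split]; [apply: IZR_le | apply: IZR_le | apply: IZR_lt].
by split; [|split]; [apply: IZR_le | apply: IZR_le | apply: IZR_lt].
Qed.

Lemma open_segs_apartZP p q r s :
  open_segs_apartZ p q r s -> open_segs_apart (ptZ p) (ptZ q) (ptZ r) (ptZ s).
Proof. by case/orP=> /open_seg_off_lineZP; [left | right]. Qed.

Definition Zpoint_eqb (p q : Z * Z) : bool := (p.1 =? q.1)%Z && (p.2 =? q.2)%Z.

Definition distinct_pointsZ (n : nat) (C : nat -> Z * Z) : bool :=
  all (fun i => all (fun j => (i == j) || ~~ Zpoint_eqb (C i) (C j)) (iota 0 n))
    (iota 0 n).

Definition vertices_off_edgesZ (n : nat) (L : seq (nat * nat)) (C : nat -> Z * Z) :
    bool :=
  all (fun p => all (fun z =>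
    [|| z == p.1, z == p.2 | ~~ (orientZ (C p.1) (C p.2) (C z) =? 0)%Z]) (iota 0 n)) L.

Definition edges_apartZ (L : seq (nat * nat)) (C : nat -> Z * Z) : bool :=
  all (fun p => all (fun p' =>
    (p == p') || open_segs_apartZ (C p.1) (C p.2) (C p'.1) (C p'.2)) L) L.

Lemma integer_drawing_planar n L C : edge_list_wf n L -> distinct_pointsZ n C ->
  vertices_off_edgesZ n L C -> edges_apartZ L C -> planar (list_graph n L).
Proof.
move=> L_wf distinct off apart; pose pos (x : 'I_n) := ptZ (C x).
have vertex_in (x : 'I_n) : (x : nat) \in iota 0 n by rewrite mem_iota ltn_ord.
apply: (@straight_line_planar _ _ pos); first exact: list_graph_irreflexive.
- move=> x y [/eq_IZR E1 /eq_IZR E2]; apply/val_inj/eqP.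
  have /orP[// | ] := allP (allP distinct _ (vertex_in x)) _ (vertex_in y).
  by rewrite /Zpoint_eqb E1 E2 !Z.eqb_refl.
- have off_line p (z : 'I_n) : p \in L -> (z : nat) != p.1 -> (z : nat) != p.2 ->
      orient (ptZ (C p.1)) (ptZ (C p.2)) (ptZ (C z)) <> 0.
    move=> mem zp1 zp2; have := allP (allP off _ mem) _ (vertex_in z).
    rewrite (negbTE zp1) (negbTE zp2) orient_ptZ => /negP nz /eq_IZR /Z.eqb_eq.
    exact: nz.
  move=> x y z /orP[] mem zx zy; first exact: off_line mem zx zy.
  by rewrite /pos orientC; have /= := off_line _ z mem zy zx; lra.
have apart_edges (a b c d : 'I_n) :
    ((a : nat), (b : nat)) \in L -> ((c : nat), (d : nat)) \in L ->
    ~~ [|| (a == c) && (b == d) | (a == d) && (b == c)] ->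
    open_segs_apart (pos a) (pos b) (pos c) (pos d).
  move=> mab mcd neq; apply: open_segs_apartZP.
  have /orP[/eqP [/val_inj ac /val_inj bd] | //] := allP (allP apart _ mab) _ mcd.
  by rewrite ac bd !eqxx in neq.
move=> x y u v /orP[] mxy /orP[] muv /negP neq.
- exact: apart_edges mxy muv neq.
- by apply/open_segs_apartNr/apart_edges; rewrite // orbC.
- by apply/open_segs_apartN/apart_edges; rewrite // orbC !(andbC (y == _)).
- apply/open_segs_apartN/open_segs_apartNr/apart_edges => //.
  by rewrite !(andbC (y == _)).
Qed.

End IntegerDrawing.

(** * A sound DPLL refuter *)

Section DPLL.
Variable V : eqType.

Definition literal := (bool * V)%type.
Definition clause := seq literal.
Definition cnf := seq clause.

Definition lit_sat (a : V -> bool) (l : literal) : bool := a l.2 == l.1.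
Definition clause_sat (a : V -> bool) (c : clause) : bool := has (lit_sat a) c.
Definition cnf_sat (a : V -> bool) (F : cnf) : bool := all (clause_sat a) F.

Definition assign (x : V) (b : bool) (F : cnf) : cnf :=
  [seq [seq l <- c | (l.2 != x) || (l.1 == b)]
  | c <- F & ~~ has (fun l : literal => (l.2 == x) && (l.1 == b)) c].

Definition has_empty_clause (F : cnf) : bool :=
  has (fun c : clause => if c is [::] then true else false) F.

Fixpoint unit_literal (F : cnf) : option literal :=
  if F is c :: F' then if c is [:: l] then Some l else unit_literal F' else None.

Fixpoint shortest_positive (F : cnf) (best : option (nat * V)) : option (nat * V) :=
  if F is c :: F' then
    let best' :=
      if c is l :: _ then
        if all fst c then
          if best is Some (k, _) then if size c < k then Some (size c, l.2) else best
          else Some (size c, l.2)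
        else best
      else best in
    shortest_positive F' best'
  else best.

Fixpoint refute (fuel : nat) (F : cnf) : bool :=
  if has_empty_clause F then true else
  if fuel is k.+1 then
    match unit_literal F with
    | Some (b, x) => refute k (assign x b F)
    | None =>
        if shortest_positive F None is Some (_, x) then
          refute k (assign x true F) && refute k (assign x false F)
        else false
    end
  else false.

Lemma assign_sat a x b F : a x = b -> cnf_sat a F -> cnf_sat a (assign x b F).
Proof.
move=> ax; rewrite /cnf_sat all_map all_filter; apply: sub_all => c /= sat_c.
apply/implyP=> _; have [l l_in sat_l] := hasP sat_c.
apply/hasP; exists l => //; rewrite mem_filter l_in andbT.
apply: contraTT sat_l; rewrite /lit_sat negb_or negbK => /andP[/eqP-> lb].
by rewrite ax eq_sym.
Qed.

Lemma unit_literal_sat a F l : cnf_sat a F -> unit_literal F = Some l -> lit_sat a l.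
Proof.
elim: F => //= c F IH /andP[sat_c sat_F].
case: c sat_c => [|l0 [|l1 c]] /=; rewrite ?orbF => sat_c; last exact: IH.
  exact: IH.
by case=> <-.
Qed.

Lemma has_empty_clause_unsat a F : has_empty_clause F -> ~~ cnf_sat a F.
Proof. by case/hasP=> -[|] // c_in _; apply/allPn; exists [::]. Qed.

Lemma refute_sound fuel a F : refute fuel F -> ~~ cnf_sat a F.
Proof.
elim: fuel F => [|k IH] F /=; case: ifP => [/(has_empty_clause_unsat a) // | _] //.
case unit_F: (unit_literal F) => [[b x]|].
  move=> ref; apply/negP=> sat_F; have /eqP ax := unit_literal_sat sat_F unit_F.
  by have /negP := IH _ ref; apply; apply: assign_sat.
case: (shortest_positive F None) => [[_ x]|] // /andP[ref_t ref_f].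
apply/negP=> sat_F; case ax: (a x).
  by have /negP := IH _ ref_t; apply; apply: assign_sat.
by have /negP := IH _ ref_f; apply; apply: assign_sat.
Qed.

End DPLL.

Arguments lit_sat : simpl never.

(** * Star forests as a propositional formula *)

Definition branching (T : finType) (f : rel T) (x : T) : bool :=
  [exists u, exists w, (u != w) && f x u && f x w].

Lemma star_forest_edge_branching (T : finType) (e f : rel T) u v :
  irreflexive e -> star_forest e f -> f u v -> ~~ (branching f u && branching f v).
Proof.
move=> irr_e [[_ f_sub] centre] uv; have [c star] := centre u.
have centreP x : connect f u x -> branching f x -> x = c.
  move=> ux /existsP[w1 /existsP[w2 /andP[/andP[w12 xw1] xw2]]].
  apply/eqP; apply: contraNT w12 => xc.
  move: (star _ _ ux xw1) (star _ _ ux xw2); rewrite (negbTE xc) /= => /eqP-> /eqP->.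
  exact: eqxx.
apply/negP=> /andP[/(centreP _ (connect0 _ _)) uc /(centreP _ (connect1 uv)) vc].
by have := f_sub _ _ uv; rewrite uc vc irr_e.
Qed.

Lemma delete_edges_symmetric (T : finType) (e f : rel T) :
  symmetric e -> symmetric f -> symmetric (delete_edges e f).
Proof. by move=> sym_e sym_f x y; rewrite /delete_edges sym_e sym_f. Qed.

Lemma delete_edges_irreflexive (T : finType) (e f : rel T) :
  irreflexive e -> irreflexive (delete_edges e f).
Proof. by move=> irr_e x; rewrite /delete_edges irr_e. Qed.

Lemma contains_K4_clique (T : finType) (g : rel T) a b c d :
  symmetric g -> irreflexive g ->
  g a b -> g a c -> g a d -> g b c -> g b d -> g c d -> contains_K4 g.
Proof.
move=> sym irr ab ac ad bc bd cd; pose k (i : 'I_4) := nth a [:: a; b; c; d] i.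
have adj i j : i != j -> g (k i) (k j).
  by case: i j => [[|[|[|[|i]]]] ?] [[|[|[|[|j]]]] ?] //=;
    rewrite ?eqxx // => _; rewrite sym.
exists k; split=> // i j kij; apply/eqP/negPn/negP => /adj.
by rewrite kij irr.
Qed.

(* Variables are binary numbers, so that the comparisons made by the SAT
   search stay cheap. *)
Definition edge_var (L : seq (nat * nat)) (m k : nat) : N + N :=
  inl (N.of_nat (index (minn m k, maxn m k) L)).

Definition vertex_var (m : nat) : N + N := inr (N.of_nat m).

Definition k4_clause (L : seq (nat * nat)) (q : nat * nat * nat * nat) :
    clause (N + N)%type :=
  let: (a, b, c, d) := q in
  [:: (true, edge_var L a b); (true, edge_var L a c); (true, edge_var L a d);
      (true, edge_var L b c); (true, edge_var L b d); (true, edge_var L c d)].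

Definition path_clause (L : seq (nat * nat)) (t : nat * nat * nat) :
    clause (N + N)%type :=
  let: (u, v, w) := t in
  [:: (false, edge_var L u v); (false, edge_var L v w); (true, vertex_var v)].

Definition edge_clause (L : seq (nat * nat)) (p : nat * nat) : clause (N + N)%type :=
  [:: (false, edge_var L p.1 p.2); (false, vertex_var p.1); (false, vertex_var p.2)].

Definition neighbours (L : seq (nat * nat)) (m : nat) : seq nat :=
  sort leq ([seq p.2 | p <- L & p.1 == m] ++ [seq p.1 | p <- L & p.2 == m]).

Definition is_K4 (L : seq (nat * nat)) (q : nat * nat * nat * nat) : bool :=
  let: (a, b, c, d) := q in
  [&& list_adj L a b, list_adj L a c, list_adj L a d,
      list_adj L b c, list_adj L b d & list_adj L c d].

Definition K4_list (n : nat) (L : seq (nat * nat)) : seq (nat * nat * nat * nat) :=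
  [seq q <- flatten [seq flatten [seq flatten [seq [seq (a, b, c, d)
     | d <- neighbours L a & c < d] | c <- neighbours L a & b < c]
     | b <- neighbours L a & a < b] | a <- iota 0 n] | is_K4 L q].

Definition is_path (L : seq (nat * nat)) (t : nat * nat * nat) : bool :=
  let: (u, v, w) := t in [&& list_adj L u v, list_adj L v w & u != w].

Definition path_list (n : nat) (L : seq (nat * nat)) : seq (nat * nat * nat) :=
  [seq t <- flatten [seq flatten [seq [seq (u, v, w) | w <- neighbours L v & u < w]
     | u <- neighbours L v] | v <- iota 0 n] | is_path L t].

Definition star_forest_cnf (n : nat) (L : seq (nat * nat)) : cnf (N + N)%type :=
  [seq k4_clause L q | q <- K4_list n L] ++ [seq path_clause L t | t <- path_list n L] ++
  [seq edge_clause L p | p <- L].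

Definition forest_assignment (n : nat) (L : seq (nat * nat)) (f : rel 'I_n.+1)
    (x : N + N) : bool :=
  match x with
  | inl i => let p := nth (0, 0) L (N.to_nat i) in f (inord p.1) (inord p.2)
  | inr m => branching f (inord (N.to_nat m))
  end.

Section StarForestEncoding.
Variables (n : nat) (L : seq (nat * nat)) (f : rel 'I_n.+1).
Hypotheses (L_wf : edge_list_wf n.+1 L) (forest : star_forest (list_graph n.+1 L) f).
Let a := forest_assignment L f.

Lemma lit_sat_edge b m k : list_adj L m k ->
  lit_sat a (b, edge_var L m k) = (f (inord m) (inord k) == b).
Proof.
move=> /(list_adj_edge L_wf)[_ _ _ mem]; rewrite /lit_sat /a /= Nat2N.id nth_index //.
by case: leqP; rewrite //= forest.1.1.
Qed.

Lemma lit_sat_vertex b m : lit_sat a (b, vertex_var m) = (branching f (inord m) == b).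
Proof. by rewrite /lit_sat /a /= Nat2N.id. Qed.

Lemma k4_clause_sat q : ~ contains_K4 (delete_edges (list_graph n.+1 L) f) ->
  is_K4 L q -> clause_sat a (k4_clause L q).
Proof.
move=> noK4; case: q => [[[u v] w] x] /and5P[uv uw ux vw /andP[vx wx]].
rewrite /clause_sat /= !lit_sat_edge // !eqb_id orbF.
apply: contraT; rewrite !negb_or => /and5P[fuv fuw fux fvw /andP[fvx fwx]].
exfalso; apply: noK4.
have del m k : list_adj L m k -> ~~ f (inord m) (inord k) ->
    delete_edges (list_graph n.+1 L) f (inord m) (inord k).
  by move=> mk fmk; rewrite /delete_edges list_graph_inord.
apply: (contains_K4_clique (a := inord u) (b := inord v) (c := inord w) (d := inord x)).
- exact: delete_edges_symmetric (@list_graph_symmetric _ L) forest.1.1.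
- exact/delete_edges_irreflexive/list_graph_irreflexive.
all: exact: del.
Qed.

Lemma path_clause_sat t : is_path L t -> clause_sat a (path_clause L t).
Proof.
case: t => [[u v] w] /and3P[uv vw uw].
rewrite /clause_sat /= !lit_sat_edge // lit_sat_vertex eqb_id orbF.
case fuv: (f _ _); case fvw: (f _ _) => //=; apply/existsP; exists (inord u).
apply/existsP; exists (inord w); rewrite forest.1.1 fuv fvw !andbT.
have [u_lt _ _ _] := list_adj_edge L_wf uv; have [_ w_lt _ _] := list_adj_edge L_wf vw.
by apply: contra uw => /eqP/(congr1 val); rewrite /= !inordK // => ->.
Qed.

Lemma edge_clause_sat p : p \in L -> clause_sat a (edge_clause L p).
Proof.
move=> mem; have adj : list_adj L p.1 p.2 by rewrite /list_adj -surjective_pairing mem.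
rewrite /clause_sat /= lit_sat_edge // !lit_sat_vertex orbF.
case fp: (f _ _) => //=; rewrite !eqbF_neg -negb_and.
exact: star_forest_edge_branching (list_graph_irreflexive L_wf) forest fp.
Qed.

Lemma star_forest_cnf_sat :
  ~ contains_K4 (delete_edges (list_graph n.+1 L) f) ->
  cnf_sat a (star_forest_cnf n.+1 L).
Proof.
move=> noK4; rewrite /cnf_sat !all_cat !all_map; apply/and3P; split; apply/allP=> x /=.
- by rewrite mem_filter => /andP[/(k4_clause_sat noK4)].
- by rewrite mem_filter => /andP[/path_clause_sat].
- exact: edge_clause_sat.
Qed.

End StarForestEncoding.

Lemma refute_star_forest_cnf n L fuel : edge_list_wf n.+1 L ->
  refute fuel (star_forest_cnf n.+1 L) ->
  forall f, star_forest (list_graph n.+1 L) f ->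
    contains_K4 (delete_edges (list_graph n.+1 L) f).
Proof.
move=> L_wf refuted f forest; apply: contrapT => noK4.
by have := refute_sound (forest_assignment L f) refuted; rewrite star_forest_cnf_sat.
Qed.

(** * The graph G2 *)

Definition G2_edges : seq (nat * nat) := [::
  (0,1); (0,2); (0,3); (0,4); (0,5); (0,6); (0,7); (0,9); (0,10); (0,15);
  (0,16); (0,17); (0,38); (0,39); (0,40); (0,41); (0,43); (0,44); (0,46);
  (1,2); (1,3); (1,4); (1,5); (1,6); (1,8); (1,11); (1,12); (1,14); (1,20);
  (1,21); (1,22); (1,24); (1,27); (1,28); (1,29); (1,36); (2,3); (2,20);
  (2,21); (2,22); (2,23); (2,25); (2,26); (2,30); (2,33); (2,34); (2,38);
  (2,39); (2,40); (2,42); (2,47); (2,48); (2,49); (3,4); (3,11); (3,12);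
  (3,13); (3,15); (3,18); (3,20); (3,30); (3,31); (3,36); (3,37); (3,38);
  (3,43); (3,44); (3,45); (3,47); (3,48); (3,50); (4,5); (4,8); (4,9); (4,11);
  (4,13); (4,14); (4,15); (4,16); (4,17); (4,18); (4,19); (5,6); (5,7); (5,8);
  (5,9); (5,10); (6,7); (9,10); (11,12); (11,13); (11,14); (15,16); (15,18);
  (15,19); (16,17); (18,19); (20,21); (20,25); (20,27); (20,28); (20,30);
  (20,31); (20,32); (20,33); (20,34); (20,35); (20,36); (20,37); (21,22);
  (21,23); (21,24); (21,25); (21,26); (21,27); (21,29); (22,23); (22,24);
  (25,26); (27,28); (27,29); (30,31); (30,32); (30,33); (30,35); (31,32);
  (33,34); (33,35); (36,37); (38,39); (38,41); (38,42); (38,43); (38,45);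
  (38,46); (38,47); (38,49); (38,50); (39,40); (39,41); (39,42); (43,44);
  (43,45); (43,46); (47,48); (47,49); (47,50)].

Definition G2_coords : seq (Z * Z) := ([::
  (0,0); (1000000000,0); (0,1000000000); (333333333,333333333);
  (393939393,121212121); (420875420,26936026); (546490546,10360010);
  (297651066,11475703); (558922558,43771043); (291005290,52910052);
  (194149284,21776203); (598484848,155303030); (612878787,179924242);
  (437121211,195075757); (668831168,87662337); (254079253,149184149);
  (249237940,103998565); (247220727,85171238); (326673325,191808191);
  (319965747,156415013); (527777777,361111111); (469907407,483796296);
  (488425925,493767806); (320987653,660018993); (583333332,391025640);
  (360449735,578703703); (297701719,660300925); (624131944,316840277);
  (698350694,239496527); (621977880,339184670); (344444444,477777777);
  (409027777,379861110); (427083332,406249999); (290740740,612962962);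
  (271212120,662121211); (399768517,467824073); (524999999,274999999);
  (471428570,328571428); (133333333,533333333); (24242424,460606060);
  (4407713,447382920); (61616161,337373737); (71515151,658787878);
  (116666666,216666666); (121794871,160256409); (212499999,370833332);
  (83333333,249999999); (206666666,526666666); (134999999,714999999);
  (113333333,686666666); (255333332,431333332)])%Z.

Definition G2_coord (m : nat) : Z * Z := nth (0, 0)%Z G2_coords m.

Lemma G2_edges_wf : edge_list_wf 51 G2_edges.
Proof. by vm_compute. Qed.

Lemma G2_straight_line_drawing :
  [&& distinct_pointsZ 51 G2_coord, vertices_off_edgesZ 51 G2_edges G2_coord
    & edges_apartZ G2_edges G2_coord].
Proof. by vm_compute. Qed.

Lemma G2_star_forest_cnf_refuted : refute 1000 (star_forest_cnf 51 G2_edges).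
Proof. by vm_compute. Qed.

Theorem theorem7 :
  exists (T : finType) (e : rel T),
    simple_graph e /\ planar e /\
    forall f : rel T, star_forest e f -> contains_K4 (delete_edges e f).
Proof.
exists ('I_51 : finType), (list_graph 51 G2_edges); have wf := G2_edges_wf.
split; first by split; [exact: list_graph_symmetric | exact: list_graph_irreflexive].
split; first by case/and3P: G2_straight_line_drawing; apply: integer_drawing_planar.
exact: refute_star_forest_cnf wf G2_star_forest_cnf_refuted.
Qed.
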